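(* Let $\boldsymbol\theta_0,\boldsymbol\theta_1,\dots\in\mathbb{R}^{d\times d}$ be orthogonal and let $Z_0^{\parallel},Z_1^{\parallel},\dots\subseteq\mathbb{R}^d$ be linear subspaces with $\boldsymbol\theta_t Z_t^{\parallel}=Z_{t+1}^{\parallel}$; let $\mathbf{P}_t$ be the orthogonal projection onto $Z_t^{\parallel}$ and let $\alpha_t\in\mathbb{R}$. Define $\mathbf{P}_t^0=\mathbf{P}_t$, $\mathbf{P}_t^{s+1}=\boldsymbol\theta_{t-s-1}^{-1}\mathbf{P}_t^s\boldsymbol\theta_{t-s-1}$ for $0\le s\le t-1$, $\mathbf{G}_t^s=\alpha_t\mathbf{I}+(1-\alpha_t)\mathbf{P}_t^s$, and $\mathbf{F}_t=\mathbf{G}_{t-1}^{t-1}\mathbf{G}_{t-2}^{t-2}\cdots\mathbf{G}_0^0$ for $t\ge1$. Then for all $t\ge1$, $$\mathbf{F}_t=\Big(\prod_{s=0}^{t-1}\alpha_s\Big)\mathbf{I}+\Big(1-\prod_{s=0}^{t-1}\alpha_s\Big)\mathbf{P}_0 .$$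
   Context: $Z_t^{\parallel}$ is the linear embedding subspace of the data at layer $t$ of a network with linear layer maps $\boldsymbol\theta_t$; $\alpha_t$ are control regularization factors. *)

(* Vectors of R^d are column vectors 'cV[R]_d; a linear
   subspace of R^d is represented by a matrix Z : 'M[R]_(d,d) whose COLUMN
   space is the subspace, i.e. Z^T has the subspace as row space (mxalgebra's
   %MS theory works with row spaces). *)
From HB Require Import structures.
From mathcomp Require Import all_boot all_order all_algebra.
Set Implicit Arguments. Unset Strict Implicit. Unset Printing Implicit Defensive.
Import Order.TTheory GRing.Theory Num.Theory.
Local Open Scope ring_scope.

Definition orthogonal_mx (R : realFieldType) (d : nat) (A : 'M[R]_d) : Prop :=
  A^T *m A = 1%:M /\ A *m A^T = 1%:M.

Definition colspace (R : fieldType) (m n : nat) (A : 'M[R]_(m, n)) := A^T.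

Definition is_orth_proj (R : realFieldType) (d : nat) (Z P : 'M[R]_d) : Prop :=
  P^T = P /\ P *m P = P /\ (colspace P == colspace Z)%MS.

Fixpoint Pts (R : realFieldType) (d : nat) (theta P : nat -> 'M[R]_d)
    (t s : nat) : 'M[R]_d :=
  match s with
  | 0 => P t
  | s'.+1 => invmx (theta (t - s'.+1)%N) *m Pts theta P t s' *m theta (t - s'.+1)%N
  end.

Definition Gts (R : realFieldType) (d : nat) (theta P : nat -> 'M[R]_d)
    (alpha : nat -> R) (t s : nat) : 'M[R]_d :=
  alpha t *: 1%:M + (1 - alpha t) *: Pts theta P t s.

Fixpoint Ft (R : realFieldType) (d : nat) (theta P : nat -> 'M[R]_d)
    (alpha : nat -> R) (t : nat) : 'M[R]_d :=
  match t with
  | 0 => 1%:M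
  | t'.+1 => Gts theta P alpha t' t' *m Ft theta P alpha t'
  end.

(* Conjugation by an orthogonal matrix maps the orthogonal projection onto a
   subspace to the orthogonal projection onto its image, and such a projection
   is unique; hence P_{t+1} = theta_t P_t theta_t^T and every P_t^t collapses
   to P_0.  All factors of F_t are then of the form a I + (1 - a) P_0, and
   since P_0 is idempotent these compose by multiplying the coefficients a. *)
From HB Require Import structures.
From mathcomp Require Import all_boot all_order all_algebra.
From mathcomp Require Import ring.
Set Implicit Arguments. Unset Strict Implicit. Unset Printing Implicit Defensive.
Import Order.TTheory GRing.Theory Num.Theory.
Local Open Scope ring_scope.

Lemma orthogonal_mx_invmx (R : realFieldType) (d : nat) (A : 'M[R]_d) :
  orthogonal_mx A -> invmx A = A^T.
Proof.
move=> [AtA AAt].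
have uA : A \in unitmx by case/mulmx1_unit: AAt.
by rewrite -[invmx A]mulmx1 -AAt mulmxA mulVmx // mul1mx.
Qed.

Lemma sym_idem_eqmx_eq (R : fieldType) (d : nat) (P Q : 'M[R]_d) :
  P^T = P -> P *m P = P -> Q^T = Q -> Q *m Q = Q -> (P == Q)%MS -> P = Q.
Proof.
move=> sP iP sQ iQ /andP[PQ QP].
have [X eX] := submxP PQ; have [Y eY] := submxP QP.
have PQ_P : P *m Q = P by rewrite {1}eX -mulmxA iQ -eX.
have QP_Q : Q *m P = Q by rewrite {1}eY -mulmxA iP -eY.
by rewrite -sP -PQ_P trmx_mul sQ sP QP_Q.
Qed.

Lemma orth_proj_uniq (R : realFieldType) (d : nat) (Z P Q : 'M[R]_d) :
  is_orth_proj Z P -> is_orth_proj Z Q -> P = Q.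
Proof.
move=> [sP [iP PZ]] [sQ [iQ QZ]]; apply: sym_idem_eqmx_eq => //.
rewrite -[P]sP -[Q]sQ; apply/eqmxP.
exact: eqmx_trans (eqmxP PZ) (eqmx_sym (eqmxP QZ)).
Qed.

Lemma orth_proj_eqmx (R : realFieldType) (d : nat) (Z Z' P : 'M[R]_d) :
  (colspace Z == colspace Z')%MS -> is_orth_proj Z P -> is_orth_proj Z' P.
Proof.
move=> ZZ' [sP [iP PZ]]; split=> //; split=> //.
by apply/eqmxP; apply: eqmx_trans (eqmxP PZ) (eqmxP ZZ').
Qed.

Lemma orth_proj_conj (R : realFieldType) (d : nat) (A Z P : 'M[R]_d) :
  orthogonal_mx A -> is_orth_proj Z P ->
  is_orth_proj (A *m Z) (A *m P *m A^T).
Proof.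
move=> [AtA AAt] [sP [iP PZ]].
have uA : A \in unitmx by case/mulmx1_unit: AAt.
split; [|split].
- by rewrite !trmx_mul trmxK sP mulmxA.
- by rewrite -!mulmxA [X in P *m X]mulmxA AtA mul1mx [X in A *m X]mulmxA iP.
- rewrite /colspace !trmx_mul trmxK sP; apply/eqmxP.
  apply: eqmx_trans (eqmxMfull _ _) _; first by rewrite row_full_unit.
  by apply: eqmxMr; apply/eqmxP; rewrite -[X in (X == _)%MS]sP.
Qed.

Section Transport.

Variables (R : realFieldType) (d : nat) (theta P : nat -> 'M[R]_d).
Hypothesis theta_orth : forall t, orthogonal_mx (theta t).
Hypothesis P_transport : forall t, P t.+1 = theta t *m P t *m (theta t)^T.

Lemma Pts_transport (t s : nat) : (s <= t)%N -> Pts theta P t s = P (t - s)%N.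
Proof.
elim: s => [|s IHs] st; first by rewrite subn0.
have [AtA _] := theta_orth (t - s.+1).
rewrite /= IHs ?(ltnW st) //.
have -> : (t - s = (t - s.+1).+1)%N by rewrite subnS prednK // subn_gt0.
rewrite P_transport orthogonal_mx_invmx // -!mulmxA AtA mulmx1.
by rewrite !mulmxA AtA mul1mx.
Qed.

Lemma Pts_diag (t : nat) : Pts theta P t t = P 0%N.
Proof. by rewrite Pts_transport // subnn. Qed.

End Transport.

Lemma affine_proj_mul (R : comPzRingType) (d : nat) (Q : 'M[R]_d) (a b : R) :
  Q *m Q = Q ->
  (a *: 1%:M + (1 - a) *: Q) *m (b *: 1%:M + (1 - b) *: Q)
    = (a * b) *: 1%:M + (1 - a * b) *: Q.
Proof.
move=> iQ.
rewrite mulmxDl !mulmxDr -!scalemxAl -!scalemxAr !mul1mx !mulmx1 iQ !scalerA.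
rewrite -!addrA; congr (_ + _); rewrite addrA -!scalerDl; congr (_ *: _).
ring.
Qed.

Lemma Ft_affine (R : realFieldType) (d : nat) (theta P : nat -> 'M[R]_d)
    (alpha : nat -> R) (Q : 'M[R]_d) :
  Q *m Q = Q -> (forall t, Pts theta P t t = Q) ->
  forall t, Ft theta P alpha t =
    (\prod_(s < t) alpha s) *: 1%:M + (1 - \prod_(s < t) alpha s) *: Q.
Proof.
move=> iQ PQ; elim=> [|t IHt].
  by rewrite big_ord0 subrr scale0r addr0 scale1r.
by rewrite /= IHt /Gts PQ affine_proj_mul // big_ord_recr /= mulrC.
Qed.

Theorem lemma5 (R : realFieldType) (d : nat)
  (theta : nat -> 'M[R]_d) (Z : nat -> 'M[R]_d) (P : nat -> 'M[R]_d)
  (alpha : nat -> R)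
  (Horth : forall t, orthogonal_mx (theta t))
  (Hinv : forall t, (colspace (theta t *m Z t) == colspace (Z t.+1))%MS)
  (Hproj : forall t, is_orth_proj (Z t) (P t))
  (t : nat) (Ht : (1 <= t)%N) :
  Ft theta P alpha t =
    (\prod_(s < t) alpha s) *: 1%:M + (1 - \prod_(s < t) alpha s) *: P 0%N.
Proof.
have P_transport k : P k.+1 = theta k *m P k *m (theta k)^T.
  apply: orth_proj_uniq (Hproj k.+1) _.
  exact: orth_proj_eqmx (Hinv k) (orth_proj_conj (Horth k) (Hproj k)).
have [_ [P0_idem _]] := Hproj 0%N.
exact: Ft_affine P0_idem (Pts_diag Horth P_transport) t.
Qed.
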